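(* Let $\operatorname{St}_\eta\subset\mathbb{Z}^{E(\Gamma)}=C_1(\Gamma,\mathbb{Z})$ be the set of $\vec n=(n_e)_{e\in E(\Gamma)}$ such that $$\Big(\prod_{e\in E(\Gamma)}\{k\in\mathbb{Z}: Nn_e\le k\le N(n_e+1)\}\Big)\cap d_\Gamma^{-1}(-\eta)\neq\emptyset .$$ Then for every integer $M>0$, the set $\operatorname{St}_\eta$ is a union of finitely many orbits of the group $H_1(\Gamma,M\mathbb{Z})$ acting on $C_1(\Gamma,\mathbb{Z})$ by translations.
   Context: $\Gamma$ is a finite graph with vertex set $V(\Gamma)$ and edge set $E(\Gamma)$ (loops and multiple edges allowed), with an auxiliary orientation. $C_1(\Gamma,\mathbb{Z})=\mathbb{Z}^{E(\Gamma)}$, $\overline{C}_0(\Gamma,\mathbb{Z})\subset\mathbb{Z}^{V(\Gamma)}$ is the group of integer $0$-chains whose coordinates sum to zero, $d_\Gamma\colon C_1(\Gamma,\mathbb{Z})\to\overline{C}_0(\Gamma,\mathbb{Z})$ is the boundary map, $H_1(\Gamma,\mathbb{Z})=\ker d_\Gamma$ and $H_1(\Gamma,M\mathbb{Z})=H_1(\Gamma,\mathbb{Z})\cap (M\mathbb{Z})^{E(\Gamma)}$. Here $\eta\in\overline{C}_0(\Gamma,\mathbb{Z})$ and $N\geq 1$ is a fixed integer. *)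

From mathcomp Require Import all_boot all_order all_algebra.
Set Implicit Arguments. Unset Strict Implicit. Unset Printing Implicit Defensive.
Import Order.TTheory GRing.Theory Num.Theory.
Local Open Scope ring_scope.

(* A finite graph Gamma: finite vertex type V, finite edge type E, and an
   auxiliary orientation given by source/target maps (loops and multiple
   edges allowed). *)

Definition bdry (V E : finType) (src tgt : E -> V) (x : {ffun E -> int})
  : {ffun V -> int} :=
  [ffun v => \sum_(e | tgt e == v) x e - \sum_(e | src e == v) x e].

Definition reduced_chain (V : finType) (eta : {ffun V -> int}) : Prop :=
  \sum_(v : V) eta v = 0.

Definition H1M (V E : finType) (src tgt : E -> V) (M : int)
  (h : {ffun E -> int}) : Prop :=
  bdry src tgt h = 0 /\ forall e, (M %| h e)%Z.

Definition St (V E : finType) (src tgt : E -> V) (N : int)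
  (eta : {ffun V -> int}) (n : {ffun E -> int}) : Prop :=
  exists k : {ffun E -> int},
    (forall e, N * n e <= k e <= N * (n e + 1)) /\
    bdry src tgt k = [ffun v => - eta v].

Definition translate (E : finType) (r h : {ffun E -> int}) : {ffun E -> int} :=
  [ffun e => r e + h e].

From mathcomp Require Import all_boot all_order all_algebra.
From mathcomp Require Import zify.
From Stdlib Require Import Classical.
Import Order.TTheory GRing.Theory Num.Theory.
Local Open Scope ring_scope.

(* If [k] witnesses [n \in St_eta] and [h] is a cycle, then [k + N h] witnesses
   [n + h], so [St_eta] is a union of orbits.  For finiteness, code a witnessed
   pair [(n, k)] by the residues [n mod M] and the offsets [k - N n], which lie
   in [0, N]: there are finitely many codes, and if [(n, k)] and [(r, k')] share
   a code then [k - k' = N (n - r)], so [n - r] is a cycle divisible by [M].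
   One representative per realised code therefore suffices. *)

Lemma exists_seq_choice {T : finType} {X : eqType} (R : T -> X -> Prop) :
  exists2 s : seq X, {in s, forall x, exists t, R t x}
    & forall t x, R t x -> exists2 y, y \in s & R t y.
Proof.
have /fin_all_exists[f Rf] (t : T) : exists o : option X,
    if o is Some x then R t x else forall x, ~ R t x.
  have [[x Rtx]|noR] := classic (exists x, R t x); first by exists (Some x).
  by exists None => x Rtx; apply: noR; exists x.
exists (pmap f (enum T)) => [x | t x Rtx].
  by rewrite mem_pmap => /mapP[t _ ft]; exists t; move: (Rf t); rewrite -ft.
move: (Rf t); case ft: (f t) => [y|] Rty; last by case: (Rty x).
by exists y; rewrite // mem_pmap; apply/mapP; exists t; rewrite ?mem_enum.
Qed.

Definition ord_of_int (n : nat) (z : int) : 'I_n.+1 := inord `|z|%N.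

Lemma ord_of_int_inj (n : nat) (x y : int) :
  ord_of_int n x = ord_of_int n y -> 0 <= x <= n%:Z -> 0 <= y <= n%:Z -> x = y.
Proof. by move=> /(congr1 val) /= + x_bd y_bd; rewrite !inordK; lia. Qed.

Lemma bdryDM (V E : finType) (src tgt : E -> V) (a : int)
    (x y : {ffun E -> int}) (v : V) :
  bdry src tgt [ffun e => x e + a * y e] v =
  bdry src tgt x v + a * bdry src tgt y v.
Proof.
rewrite !ffunE !(eq_bigr _ (fun e _ => ffunE _ e)) !big_split /= -!mulr_sumr.
by rewrite mulrBr addrACA opprD.
Qed.

Section Stability.

Context {V E : finType} (src tgt : E -> V) (N : int) (eta : {ffun V -> int}).

Definition St_witness (n k : {ffun E -> int}) : Prop :=
  (forall e, N * n e <= k e <= N * (n e + 1)) /\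
  bdry src tgt k = [ffun v => - eta v].

Lemma St_translate (n h : {ffun E -> int}) :
  bdry src tgt h = 0 -> St src tgt N eta n -> St src tgt N eta (translate n h).
Proof.
move=> dh [k [k_box dk]]; exists [ffun e => k e + N * h e]; split.
  by move=> e; rewrite !ffunE; have := k_box e; lia.
by apply/ffunP => v; rewrite bdryDM dk dh !ffunE mulr0 addr0.
Qed.

Definition St_code (M : int) (n k : {ffun E -> int}) :
    {ffun E -> 'I_`|M|.+1 * 'I_`|N|.+1} :=
  [ffun e => (ord_of_int _ (n e %% M)%Z, ord_of_int _ (k e - N * n e))].

Lemma St_code_inj (M : int) (n k r k' : {ffun E -> int}) :
  0 < N -> M != 0 -> St_witness n k -> St_witness r k' ->
  St_code M n k = St_code M r k' -> H1M src tgt M (n - r).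
Proof.
move=> N_gt0 M_neq0 [k_box dk] [k'_box dk'] /ffunP same_code.
have same_parts e :
    (n e = r e %[mod M])%Z /\ k e - N * n e = k' e - N * r e.
  have := modz_ge0 (n e) M_neq0; have := ltz_mod (n e) M_neq0.
  have := modz_ge0 (r e) M_neq0; have := ltz_mod (r e) M_neq0.
  have := k_box e; have := k'_box e.
  move: (same_code e); rewrite !ffunE.
  by case=> /ord_of_int_inj eq_res /ord_of_int_inj eq_off; split;
    [apply: eq_res | apply: eq_off]; lia.
split; last by move=> e; rewrite !ffunE -eqz_mod_dvd (same_parts e).1.
have kE : k = [ffun e => k' e + N * (n - r) e].
  apply/ffunP => e; rewrite !ffunE.
  by rewrite mulrBr addrA addrAC -(same_parts e).2 subrK.
apply/ffunP => v; rewrite [RHS]ffunE; move/ffunP/(_ v): dk.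
rewrite kE bdryDM dk' ffunE => /eqP.
by rewrite -subr_eq0 addrAC subrr add0r mulf_eq0 gt_eqF //= => /eqP.
Qed.

End Stability.

Theorem lemma2p19 (V E : finType) (src tgt : E -> V) (N : int)
  (eta : {ffun V -> int}) (M : int) :
  1 <= N -> reduced_chain eta -> 0 < M ->
  exists reps : seq {ffun E -> int},
    forall n : {ffun E -> int},
      St src tgt N eta n <->
      exists2 r, r \in reps & exists h, H1M src tgt M h /\ n = translate r h.
Proof.
move=> N_ge1 _ M_gt0.
have [reps reps_St reps_cover] := exists_seq_choice
  (fun c n => exists k, St_witness src tgt N eta n k /\ c = St_code N M n k).
exists reps => n; split.
- case=> k wk.
  have [r r_reps [k' [wk' same_code]]] :=
    reps_cover _ n (ex_intro _ k (conj wk erefl)).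
  exists r => //; exists (n - r); split.
    by apply: St_code_inj wk wk' same_code; lia.
  by apply/ffunP => e; rewrite !ffunE addrC subrK.
- case=> r /reps_St[_ [k [wk _]]] [h [[dh _] ->]].
  exact: St_translate dh (ex_intro _ k wk).
Qed.
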